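(* Let $G$ be a graph and $u,v$ vertices with $d(u,v) \geq 3$, and let the sets $A_k, B_k$ ($k \ge 1$) be defined as in the context. Then for every $k \geq 1$, every vertex $x \in A_k$ with $N(x) \cap N^k(u,v) = \emptyset$ is a witness of the non-edge $uv$, i.e. $|d(x,u) - d(x,v)| \geq 2$.
   Context: $d$ is the graph distance in $G$ and $N(X)$ is the set of neighbours of vertices in $X$ ($N(x)=N(\{x\})$). For $k\ge 1$, $N^k(u,v) = \{x \in V(G) : \min(d(u,x),d(v,x)) = k\}$. Define $A_1 = N^1(u,v)$, $B_1 = \emptyset$, and for $k \geq 2$: $\mathcal{B}^k_1 = N(B_{k-1})$; $\mathcal{B}^k_2 = N(\{x \in A_{k-1} : N(x) \cap N^{k-1}(u,v) \neq \emptyset\})$; $\mathcal{B}^k_3 = \{x \in N^k(u,v) : |N(x) \cap A_{k-1}| \geq 2\}$; $B_k = N^k(u,v) \cap (\mathcal{B}^k_1 \cup \mathcal{B}^k_2 \cup \mathcal{B}^k_3)$ and $A_k = N^k(u,v) \setminus B_k$. A vertex $s$ is a witness of the non-edge $uv$ if $|d(s,u)-d(s,v)| \ge 2$. *)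

(* Finite simple graph: symmetric irreflexive relation e on a finType T. *)
From mathcomp Require Import all_boot.
Set Implicit Arguments. Unset Strict Implicit. Unset Printing Implicit Defensive.

Section Graph.
Variables (T : finType) (e : rel T).

Definition nbhd (X : {set T}) : {set T} := [set y | [exists x in X, e x y]].

Fixpoint ball (k : nat) (x : T) : {set T} :=
  match k with
  | 0 => [set x]
  | k'.+1 => ball k' x :|: nbhd (ball k' x)
  end.

(* graph distance with values in nat + infinity (None = infinity, i.e. not connected) *)
Definition dist (x y : T) : option nat :=
  let k := find (fun k => y \in ball k x) (iota 0 #|T|) in
  if k < #|T| then Some k else None.

Definition emin (a b : option nat) : option nat :=
  match a, b with
  | Some m, Some n => Some (minn m n)
  | Some m, None => Some m
  | None, Some n => Some n
  | None, None => None
  end.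

Definition Nk (u v : T) (k : nat) : {set T} :=
  [set x | emin (dist u x) (dist v x) == Some k].

(* ABs u v k = (A_{k+1}, B_{k+1}) *)
Fixpoint ABs (u v : T) (k : nat) : {set T} * {set T} :=
  match k with
  | 0 => (Nk u v 1, set0)
  | k'.+1 =>
      let A := (ABs u v k').1 in
      let B := (ABs u v k').2 in
      let B1 := nbhd B in
      let B2 := nbhd [set x in A | nbhd [set x] :&: Nk u v k'.+1 != set0] in
      let B3 := [set x in Nk u v k'.+2 | 1 < #|nbhd [set x] :&: A|] in
      let Bn := Nk u v k'.+2 :&: (B1 :|: B2 :|: B3) in
      (Nk u v k'.+2 :\: Bn, Bn)
  end.

Definition Aset (u v : T) (k : nat) : {set T} := (ABs u v k.-1).1.
Definition Bset (u v : T) (k : nat) : {set T} := (ABs u v k.-1).2.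

(* s is a witness of the non-edge uv: |d(s,u) - d(s,v)| >= 2,
   where a finite value minus infinity counts as >= 2 *)
Definition witness (u v s : T) : bool :=
  match dist s u, dist s v with
  | Some a, Some b => (1 < a - b) || (1 < b - a)
  | Some _, None | None, Some _ => true
  | None, None => false
  end.

Definition dist_ge (x y : T) (n : nat) : bool :=
  match dist x y with Some d => n <= d | None => true end.

End Graph.

From mathcomp Require Import all_boot zify.

Set Implicit Arguments.
Unset Strict Implicit.
Unset Printing Implicit Defensive.

(* Swapping u and v if needed, a vertex x of N^k that is not a witness has
   d(u,x) = k and d(v,x) in {k, k+1}; both cases are refuted by induction on k.

   If d(v,x) = k+1, the neighbour z of x on a shortest path to v has
   d(v,z) = k, and d(u,z) = k-1 because x has no neighbour in N^k.  For k = 1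
   this forces d(u,v) <= 1.  For k >= 2, z is in N^{k-1}; since x in A_k is
   adjacent neither to B_{k-1} nor to a vertex of A_{k-1} with a neighbour in
   N^{k-1}, z lies in A_{k-1} and has no neighbour in N^{k-1}, so it is a
   witness by induction, although its distances to u and v differ by one.

   If d(v,x) = k, then for k = 1 x is a common neighbour of u and v.  For
   k >= 2 the neighbours of x on shortest paths to u and to v both lie in
   A_{k-1} as above, hence coincide since x has at most one neighbour in
   A_{k-1}; that vertex is at distance k-1 from both u and v, yet a witness by
   induction. *)

Section SymmetricGraph.

Variables (T : finType) (e : rel T).
Hypothesis e_sym : symmetric e.

Lemma mem_nbhd1 x y : (y \in nbhd e [set x]) = e x y.
Proof.
rewrite inE; apply/existsP/idP => [[x' /andP[/set1P-> //]] | xy].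
by exists x; rewrite set11.
Qed.

Lemma ball_mono i j x : i <= j -> ball e i x \subset ball e j x.
Proof.
elim: j => [|j IH]; first by rewrite leqn0 => /eqP->.
rewrite leq_eqVlt => /orP[/eqP-> // | /IH sub_ij].
exact: subset_trans sub_ij (subsetUl _ _).
Qed.

Lemma ballSP k x y :
  reflect (y \in ball e k x \/ exists2 z, z \in ball e k x & e z y)
          (y \in ball e k.+1 x).
Proof.
rewrite /= inE; apply: (iffP orP) => -[-> | H]; try by left.
- by right; move: H; rewrite inE => /existsP[z /andP[]]; exists z.
- by right; rewrite inE; case: H => z zk zy; apply/existsP; exists z; rewrite zk.
Qed.

Lemma ball_edge k x a b : e a b -> a \in ball e k x -> b \in ball e k.+1 x.
Proof. by move=> ab ak; apply/ballSP; right; exists a. Qed.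

Lemma ball_trans a b x y z :
  y \in ball e a x -> z \in ball e b y -> z \in ball e (a + b) x.
Proof.
move=> ya; elim: b z => [|b IH] z; first by rewrite addn0 => /set1P->.
rewrite addnS => /ballSP[/IH | [w /IH wab wz]]; last exact: ball_edge wz wab.
exact/subsetP/ball_mono.
Qed.

Lemma ball_sym k x y : (y \in ball e k x) = (x \in ball e k y).
Proof.
suff ball_symW k' x' y' : y' \in ball e k' x' -> x' \in ball e k' y'.
  by apply/idP/idP; apply: ball_symW.
elim: k' x' y' => [|k' IH] x' y'; first by move/set1P->; exact: set11.
case/ballSP => [/IH | [z /IH xz zy]]; first exact/subsetP/ball_mono.
rewrite -add1n; apply: ball_trans xz.
by apply: (@ball_edge 0 _ y'); [rewrite e_sym | exact: set11].
Qed.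

Lemma ball_stable j k x :
  ball e j x = ball e j.+1 x -> j <= k -> ball e k x = ball e j x.
Proof.
move=> stable; elim: k => [|k IH]; first by rewrite leqn0 => /eqP->.
rewrite leq_eqVlt => /orP[/eqP<- // | /IH {}IH].
by rewrite /= IH -/(ball e j.+1 x) -stable.
Qed.

Lemma card_ball_gt n x :
  (forall j, j < n -> ball e j x != ball e j.+1 x) -> n < #|ball e n x|.
Proof.
elim: n => [|n IH] grow; first by rewrite /= cards1.
apply: leq_ltn_trans (IH (fun j lt_jn => grow j (ltnW lt_jn))) _.
by apply: proper_card; rewrite properEneq grow //= subsetUl.
Qed.

Lemma dist_someP x y d :
  dist e x y = Some d <->
  [/\ y \in ball e d x, d < #|T| & forall i, i < d -> y \notin ball e i x].
Proof.
rewrite /dist; set P := (fun k => y \in ball e k x); set s := iota 0 #|T|.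
have size_s : size s = #|T| by rewrite size_iota.
split.
  case: ifP => // lt_fT [<-]; split => //.
  - have has_s : has P s by rewrite has_find size_s.
    by move: (nth_find 0 has_s); rewrite nth_iota.
  - move=> i lt_i; have lt_is : i < size s by rewrite size_s (ltn_trans lt_i lt_fT).
    by move: (before_find 0 lt_i); rewrite nth_iota -?size_s // add0n /P => ->.
case=> yd lt_dT not_before.
suff -> : find P s = d by rewrite lt_dT.
case: (ltngtP (find P s) d) => // [lt_fd | lt_df].
- have lt_fT := ltn_trans lt_fd lt_dT.
  have has_s : has P s by rewrite has_find size_s.
  move: (nth_find 0 has_s); rewrite nth_iota // add0n.
  by move/negP: (not_before _ lt_fd).
- by move: (before_find 0 lt_df); rewrite nth_iota // add0n /P yd.
Qed.

Lemma ball_of_dist x y d : dist e x y = Some d -> y \in ball e d x.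
Proof. by case/dist_someP. Qed.

Lemma dist_of_ball m x y :
  y \in ball e m x -> exists2 d, dist e x y = Some d & d <= m.
Proof.
move=> ym; have in_some_ball : exists n, y \in ball e n x by exists m.
case: (ex_minnP in_some_ball) => d yd d_min; exists d; last exact: d_min.
(* Balls grow strictly up to the first radius d reaching y, so d < #|T|. *)
have grow j : j < d -> ball e j x != ball e j.+1 x.
  move=> lt_jd; apply/eqP => stable; move: (d_min j).
  by rewrite -(ball_stable stable (ltnW lt_jd)) yd leqNgt lt_jd => /(_ isT).
apply/dist_someP; split => //.
  exact: leq_trans (card_ball_gt grow) (max_card _).
by move=> i lt_id; apply/negP => /d_min; rewrite leqNgt lt_id.
Qed.

Lemma dist_sym x y : dist e x y = dist e y x.
Proof.
rewrite /dist (@eq_find _ _ (fun k => x \in ball e k y)) // => k.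
by rewrite ball_sym.
Qed.

Lemma dist_triangle x y z a b :
  dist e x y = Some a -> dist e y z = Some b ->
  exists2 c, dist e x z = Some c & c <= a + b.
Proof.
by move=> /ball_of_dist xy /ball_of_dist yz; apply: dist_of_ball (ball_trans xy yz).
Qed.

Lemma dist_edge u a b i :
  e a b -> dist e u a = Some i -> exists2 j, dist e u b = Some j & i <= j.+1 <= i.+2.
Proof.
move=> ab ua; have [j ub le_ji] := dist_of_ball (ball_edge ab (ball_of_dist ua)).
have ba : e b a by rewrite e_sym.
have [i' ua' le_ij] := dist_of_ball (ball_edge ba (ball_of_dist ub)).
by exists j => //; move: ua'; rewrite ua => -[eq_i']; lia.
Qed.

Lemma dist_pred u x k :
  dist e u x = Some k.+1 -> exists2 y, e x y & dist e u y = Some k.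
Proof.
move=> ux; have /dist_someP[/ballSP xk1 _ not_before] := ux.
case: xk1 => [xk | [y yk yx]]; first by move/negP: (not_before k (ltnSn k)).
exists y; first by rewrite e_sym.
have [j uy le_jk] := dist_of_ball yk; have [j' ux' bound] := dist_edge yx uy.
by move: ux'; rewrite ux uy => -[eq_j']; congr Some; lia.
Qed.

Lemma dist_ge_sum u v n z a c :
  dist_ge e u v n -> dist e u z = Some a -> dist e v z = Some c -> n <= a + c.
Proof.
move=> uv uz; rewrite dist_sym => zv.
have [d ud le_d] := dist_triangle uz zv.
by move: uv; rewrite /dist_ge ud => /leq_trans; apply.
Qed.

Lemma dist_geC u v n : dist_ge e v u n = dist_ge e u v n.
Proof. by rewrite /dist_ge dist_sym. Qed.

Definition isolated (u v : T) (j : nat) (x : T) : bool :=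
  nbhd e [set x] :&: Nk e u v j == set0.

Lemma NkC u v j : Nk e v u j = Nk e u v j.
Proof.
apply/setP => x; rewrite !inE.
by case: (dist e u x) => [a|]; case: (dist e v x) => [c|] //=; rewrite minnC.
Qed.

Lemma isolatedC u v j x : isolated v u j x = isolated u v j x.
Proof. by rewrite /isolated NkC. Qed.

Lemma AsetC u v k : Aset e v u k = Aset e u v k.
Proof.
suff ABsC j : ABs e v u j = ABs e u v j by rewrite /Aset ABsC.
by elim: j => [|j IH]; rewrite /= !(NkC u v) ?IH.
Qed.

Lemma isolated_nbr u v j x z : isolated u v j x -> e x z -> z \notin Nk e u v j.
Proof.
move=> /eqP iso xz; apply/negP => zN.
have : z \in nbhd e [set x] :&: Nk e u v j by rewrite inE mem_nbhd1 xz zN.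
by rewrite iso inE.
Qed.

Lemma AsetE u v k : Aset e u v k.+1 = Nk e u v k.+1 :\: Bset e u v k.+1.
Proof. by case: k => [|k] //; rewrite /Bset /= setD0. Qed.

Lemma Aset_sub_Nk u v k x : x \in Aset e u v k.+1 -> x \in Nk e u v k.+1.
Proof. by rewrite AsetE => /setDP[]. Qed.

Lemma BsetSS u v k :
  Bset e u v k.+2 = Nk e u v k.+2 :&:
    (nbhd e (Bset e u v k.+1)
     :|: nbhd e [set y in Aset e u v k.+1 | ~~ isolated u v k.+1 y]
     :|: [set y in Nk e u v k.+2 | 1 < #|nbhd e [set y] :&: Aset e u v k.+1|]).
Proof. by []. Qed.

Lemma AsetSS_notB u v k x :
  x \in Aset e u v k.+2 ->
  [/\ x \notin nbhd e (Bset e u v k.+1),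
      x \notin nbhd e [set y in Aset e u v k.+1 | ~~ isolated u v k.+1 y]
    & #|nbhd e [set x] :&: Aset e u v k.+1| <= 1].
Proof.
rewrite AsetE BsetSS => /setDP[xN]; rewrite in_setI xN !in_setU !negb_or.
by rewrite in_set xN -leqNgt => /andP[/andP[]].
Qed.

Lemma witnessE u v x a c :
  dist e u x = Some a -> dist e v x = Some c ->
  witness e u v x = (1 < a - c) || (1 < c - a).
Proof. by rewrite /witness !(dist_sym x) => -> ->. Qed.

Lemma mem_NkE u v j x a c :
  dist e u x = Some a -> dist e v x = Some c -> (x \in Nk e u v j) = (minn a c == j).
Proof. by rewrite inE => -> ->. Qed.

Lemma nonwitness_Nk u v j x :
  x \in Nk e u v j -> ~~ witness e u v x ->
  exists2 c, j <= c <= j.+1 &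
    (dist e u x = Some j /\ dist e v x = Some c) \/
    (dist e v x = Some j /\ dist e u x = Some c).
Proof.
rewrite inE /witness !(dist_sym x).
case: (dist e u x) => [a|]; case: (dist e v x) => [c|] //= /eqP[<-] nw.
have [le_ac | lt_ca] := leqP a c.
- by exists c; [lia | left; split; congr Some; lia].
- by exists a; [lia | right; split; congr Some; lia].
Qed.

Lemma Aset_nbr u v k x w :
  x \in Aset e u v k.+2 -> e x w -> w \in Nk e u v k.+1 ->
  w \in Aset e u v k.+1 /\ isolated u v k.+1 w.
Proof.
move=> /AsetSS_notB[notB notA _] xw wN.
have x_nbhd (X : {set T}) : w \in X -> x \in nbhd e X.
  by move=> wX; rewrite inE; apply/existsP; exists w; rewrite wX e_sym.
have wA : w \in Aset e u v k.+1.
  by rewrite AsetE inE wN andbT; apply: contra notB => /x_nbhd.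
by split=> //; apply: contraNT notA => wiso; apply: x_nbhd; rewrite inE wA.
Qed.

Lemma Aset_nbr_uniq u v k x y z :
  x \in Aset e u v k.+2 -> e x y -> e x z ->
  y \in Aset e u v k.+1 -> z \in Aset e u v k.+1 -> y = z.
Proof.
move=> /AsetSS_notB[_ _ card_le1] xy xz yA zA; apply/eqP; apply: contraTT card_le1 => yz.
rewrite -ltnNge; apply: leq_trans (subset_leq_card (_ : [set y; z] \subset _)).
  by rewrite cards2 yz.
by apply/subsetP => w /set2P[]->; rewrite inE mem_nbhd1 ?xy ?xz.
Qed.

Lemma isolated_far_pred u v j x :
  isolated u v j.+1 x -> dist e u x = Some j.+1 -> dist e v x = Some j.+2 ->
  exists2 z, e x z & dist e u z = Some j /\ dist e v z = Some j.+1.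
Proof.
move=> iso ux vx; have [z xz vz] := dist_pred vx; have [i uz bound] := dist_edge xz ux.
exists z => //; split => //; rewrite uz; congr Some.
by move: (isolated_nbr iso xz); rewrite (mem_NkE _ uz vz); lia.
Qed.

Lemma N1_isolated_balancedF u v x c :
  dist_ge e u v 3 -> isolated u v 1 x ->
  dist e u x = Some 1 -> dist e v x = Some c -> c <= 2 -> False.
Proof.
move=> uv iso ux vx le_c2.
have [c2 | ] := eqVneq c 2; last by have := dist_ge_sum uv ux vx; lia.
rewrite c2 in vx; have [z _ [uz vz]] := isolated_far_pred iso ux vx.
by have := dist_ge_sum uv uz vz.
Qed.

Lemma Aset_isolated_balancedF u v k x c :
  (forall z, z \in Aset e u v k.+1 -> isolated u v k.+1 z -> witness e u v z) ->
  x \in Aset e u v k.+2 -> isolated u v k.+2 x ->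
  dist e u x = Some k.+2 -> dist e v x = Some c -> k.+2 <= c <= k.+3 -> False.
Proof.
move=> IH xA iso ux vx c_bounds.
have nbr_witness z : e x z -> z \in Nk e u v k.+1 ->
    z \in Aset e u v k.+1 /\ witness e u v z.
  by move=> xz zN; have [zA ziso] := Aset_nbr xA xz zN; split; last exact: IH zA ziso.
have [c3 | c2] : c = k.+3 \/ c = k.+2 by lia.
- rewrite c3 in vx; have [z xz [uz vz]] := isolated_far_pred iso ux vx.
  have zN : z \in Nk e u v k.+1 by rewrite (mem_NkE _ uz vz); lia.
  by have [_] := nbr_witness z xz zN; rewrite (witnessE uz vz); lia.
- rewrite c2 in vx; have [y xy uy] := dist_pred ux; have [z xz vz] := dist_pred vx.
  have [j vy bound_j] := dist_edge xy vx; have [i uz bound_i] := dist_edge xz ux.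
  have yN : y \in Nk e u v k.+1 by rewrite (mem_NkE _ uy vy); lia.
  have zN : z \in Nk e u v k.+1 by rewrite (mem_NkE _ uz vz); lia.
  have [[yA _] [zA zw]] := (nbr_witness y xy yN, nbr_witness z xz zN).
  rewrite -(Aset_nbr_uniq xA xy xz yA zA) in vz zw.
  by rewrite (witnessE uy vz) subnn in zw.
Qed.

Lemma isolated_Aset_witness k :
  forall u v, dist_ge e u v 3 ->
  forall x, x \in Aset e u v k.+1 -> isolated u v k.+1 x -> witness e u v x.
Proof.
elim: k => [|k IH] u v uv x xA iso; apply: contraT => nw; exfalso.
all: have vu : dist_ge e v u 3 by rewrite dist_geC.
all: have iso' := iso; rewrite -isolatedC in iso'.
all: have [c c_bounds [[ux vx] | [vx ux]]] := nonwitness_Nk (Aset_sub_Nk xA) nw.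
- by apply: (N1_isolated_balancedF uv iso ux vx); lia.
- by apply: (N1_isolated_balancedF vu iso' vx ux); lia.
- exact: (Aset_isolated_balancedF (IH u v uv) xA iso ux vx).
- have xA' : x \in Aset e v u k.+2 by rewrite AsetC.
  exact: (Aset_isolated_balancedF (IH v u vu) xA' iso' vx ux).
Qed.

End SymmetricGraph.

Theorem mainTheorem7 (T : finType) (e : rel T)
  (e_sym : symmetric e) (e_irr : irreflexive e)
  (u v : T) (huv : dist_ge e u v 3)
  (k : nat) (hk : 1 <= k) (x : T)
  (hxA : x \in Aset e u v k)
  (hxN : nbhd e [set x] :&: Nk e u v k == set0) :
  witness e u v x.
Proof.
case: k hk hxA hxN => [// | k] _ hxA hxN.
exact: (isolated_Aset_witness e_sym huv hxA hxN).
Qed.
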